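(* For every poset $P$ and every $n\in\omega$: $P\models\psi_n$ if and only if for all $p,q\in P$ with $p\not\leq q$, $\exists$ has an $n$-strategy for the game with starting position $(\{p\},\{q\})$.
   Context: Work in the first-order signature with one binary relation $\leq$. Let $J(x,y,z)$ express that $z$ is the join of $x,y$ (namely $x\leq z\wedge y\leq z\wedge\forall w((x\leq w\wedge y\leq w)\to z\leq w)$) and $M(x,y,z)$ that $z$ is their meet. Let $C_k(x_1,\ldots,x_k,y)=\bigvee_{i=1}^k(y=x_i)$ (false for $k=0$), $D_k=\neg C_k$, $\vec{x}_m=(x_1,\ldots,x_m)$. Define $\phi_{m0}(\vec{x}_m,y)=D_m(\vec{x}_m,y)$ and $\phi_{m(n+1)}(\vec{x}_m,y)=\forall a\forall b\forall c\Big(\big(\exists d(C_m(\vec{x}_m,d)\wedge d\leq a)\to\phi_{(m+1)n}(\vec{x}_m,a,y)\big)\wedge\big((C_m(\vec{x}_m,a)\wedge C_m(\vec{x}_m,b)\wedge M(a,b,c))\to\phi_{(m+1)n}(\vec{x}_m,c,y)\big)\wedge\big((C_m(\vec{x}_m,c)\wedge J(a,b,c))\to(\phi_{(m+1)n}(\vec{x}_m,a,y)\vee\phi_{(m+1)n}(\vec{x}_m,b,y))\big)\Big)$, and $\psi_n=\forall x\forall y(\neg(x\leq y)\to\phi_{1n}(x,y))$. The game: for a poset $P$ and $U_0,V\subseteq P$, the game with starting position $(U_0,V)$ is played between $\forall$ and $\exists$ in rounds $0,1,2,\ldots$; a set $U$ is maintained, initially $U_0$, with $V$ fixed. Each round $\forall$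 moves and $\exists$ responds: (1) if $b\geq a$ for some $a\in U$, $\forall$ may play $(b)$ and $\exists$ must add $b$ to $U$; (2) if $a,b\in U$ and $a\wedge b$ exists, $\forall$ may play $(a,b)$ and $\exists$ must add $a\wedge b$; (3) if $a\vee b$ exists and lies in $U$, $\forall$ may play $(a,b)$ and $\exists$ must choose one of $a,b$ and add it to $U$. $\forall$ wins in round $n$ if $U\cap V\neq\emptyset$ at the beginning of round $n$. $\exists$ has an $n$-strategy if she can guarantee that $\forall$ does not win until at least round $n+1$. *)

From Stdlib Require Import List.
Import ListNotations.

Section Defs.
Variable T : Type.
Variable le : T -> T -> Prop.

Definition J (x y z : T) : Prop :=
  le x z /\ le y z /\ forall w, (le x w /\ le y w) -> le z w.

Definition M (x y z : T) : Prop :=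
  le z x /\ le z y /\ forall w, (le w x /\ le w y) -> le w z.

(* C_k(x_1,...,x_k,y) = \/_{i=1}^k (y = x_i)  (False for k = 0);
   the tuple (x_1,...,x_k) is the list xs, k = length xs. *)
Fixpoint Ck (xs : list T) (y : T) : Prop :=
  match xs with
  | [] => False
  | x :: xs' => y = x \/ Ck xs' y
  end.

Definition Dk (xs : list T) (y : T) : Prop := ~ Ck xs y.

(* Semantics of phi_{mn}(x_1..x_m, y) in the structure (T, le), with
   m = length xs; (x_1,...,x_m,a) is xs ++ [a]. *)
Fixpoint phi (n : nat) (xs : list T) (y : T) : Prop :=
  match n with
  | 0 => Dk xs y
  | S n' =>
    forall a b c : T,
      ((exists d, Ck xs d /\ le d a) -> phi n' (xs ++ [a]) y)
      /\ ((Ck xs a /\ Ck xs b /\ M a b c) -> phi n' (xs ++ [c]) y)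
      /\ ((Ck xs c /\ J a b c) -> (phi n' (xs ++ [a]) y \/ phi n' (xs ++ [b]) y))
  end.

Definition psi (n : nat) : Prop :=
  forall x y : T, ~ le x y -> phi n [x] y.

(* Moves of player forall:
   Up b      : rule (1), play (b)
   Meet a b  : rule (2), play (a,b)
   Join a b  : rule (3), play (a,b) *)
Inductive move : Type :=
| Up : T -> move
| Meet : T -> T -> move
| Join : T -> T -> move.

Definition legal (U : T -> Prop) (m : move) : Prop :=
  match m with
  | Up b => exists a, U a /\ le a b
  | Meet a b => U a /\ U b /\ exists c, M a b c
  | Join a b => exists c, J a b c /\ U c
  end.

(* For a Meet
   move the added element is the meet a /\ b (unique by antisymmetry). *)
Definition step (U : T -> Prop) (m : move) (ch : bool) : T -> Prop :=
  match m with
  | Up b => fun x => U x \/ x = b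
  | Meet a b => fun x => U x \/ M a b x
  | Join a b => fun x => U x \/ x = (if ch then a else b)
  end.

(* A strategy for exists: given the history of previous moves of forall
   (most recent first) and the current move, her choice (only relevant
   for rule (3) moves). *)
Definition strategy : Type := list move -> move -> bool.

Fixpoint run (sigma : strategy) (U0 : T -> Prop) (h : list move) : T -> Prop :=
  match h with
  | [] => U0
  | m :: h' => step (run sigma U0 h') m (sigma h' m)
  end.

Fixpoint legal_hist (sigma : strategy) (U0 : T -> Prop) (h : list move) : Prop :=
  match h with
  | [] => True
  | m :: h' => legal_hist sigma U0 h' /\ legal (run sigma U0 h') m
  end.

(* sigma is an n-strategy for the game with starting position (U0, V):
   at the beginning of each round k <= n (i.e. after any legal history of
   k moves), U /\ V is empty, so forall does not win before round n+1. *)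
Definition is_n_strategy (n : nat) (U0 V : T -> Prop) (sigma : strategy) : Prop :=
  forall h : list move, legal_hist sigma U0 h -> length h <= n ->
    forall x, run sigma U0 h x -> ~ V x.

Definition has_n_strategy (n : nat) (U0 V : T -> Prop) : Prop :=
  exists sigma : strategy, is_n_strategy n U0 V sigma.

End Defs.

Arguments Up {T}.
Arguments Meet {T}.
Arguments Join {T}.

(** The formula [phi_{mk}(x_1..x_m, y)] describes exactly the last [k] rounds
    of the game from position [U = {x_1..x_m}] with [V = {y}]: each
    quantifier block is one round, the three conjuncts are the three kinds
    of moves of [forall], and the disjunction in the join clause is the
    choice of [exists].  So [psi_n] says that [exists] can survive [n]
    rounds from every [({p}, {q})] with [p </= q].  Surviving [n] rounds is
    in turn realised by a single strategy: at each join move [exists] keeps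
    an option from which the remaining rounds can still be survived. *)

From Stdlib Require Import List Arith Lia Setoid ClassicalEpsilon.
Import ListNotations.

Definition pick_bool (P : bool -> Prop) : bool :=
  if excluded_middle_informative (P true) then true else false.

Lemma pick_boolP (P : bool -> Prop) : (exists b, P b) -> P (pick_bool P).
Proof.
  unfold pick_bool; intros [[|] Hb]; destruct excluded_middle_informative; easy.
Qed.

Section Game.

Variable T : Type.
Variable le : T -> T -> Prop.

Definition add (U : T -> Prop) (a : T) : T -> Prop := fun x => U x \/ x = a.

Fixpoint survives (n : nat) (U V : T -> Prop) : Prop :=
  match n with
  | 0 => forall x, U x -> ~ V x
  | S n' => forall m, legal T le U m -> exists ch, survives n' (step T le U m ch) V
  end.

Lemma legal_ext (U U' : T -> Prop) m :
  (forall x, U x <-> U' x) -> legal T le U m -> legal T le U' m.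
Proof. intro HU; destruct m; simpl; firstorder. Qed.

Lemma survives_ext n : forall U U' V,
  (forall x, U x <-> U' x) -> survives n U V -> survives n U' V.
Proof.
  induction n as [|n IH]; simpl; intros U U' V HU H.
  - intros x Hx; apply H, HU, Hx.
  - intros m Hm.
    destruct (H m (legal_ext U' U m (fun x => iff_sym (HU x)) Hm)) as [ch Hch].
    exists ch; refine (IH _ _ _ _ Hch).
    intro x; destruct m; simpl; rewrite HU; reflexivity.
Qed.

Section Reflexive.

Hypothesis le_refl : forall x, le x x.

Lemma survives_disjoint n U V : survives n U V -> forall x, U x -> ~ V x.
Proof.
  revert U; induction n as [|n IH]; simpl; intros U H x Hx.
  - exact (H x Hx).
  - destruct (H (Up x) (ex_intro _ x (conj Hx (le_refl x)))) as [ch Hch].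
    exact (IH _ Hch x (or_introl Hx)).
Qed.

Section Strategy.

Variables (n : nat) (U0 V : T -> Prop).

Definition greedy_choice (k : nat) (U : T -> Prop) (m : move T) : bool :=
  pick_bool (fun ch => survives (n - S k) (step T le U m ch) V).

Fixpoint greedy_position (h : list (move T)) : T -> Prop :=
  match h with
  | [] => U0
  | m :: h' =>
      step T le (greedy_position h') m
        (greedy_choice (length h') (greedy_position h') m)
  end.

Definition greedy : strategy T :=
  fun h m => greedy_choice (length h) (greedy_position h) m.

Lemma run_greedy h : run T le greedy U0 h = greedy_position h.
Proof. induction h as [|m h IH]; simpl; [|rewrite IH]; reflexivity. Qed.

Lemma greedy_survives : survives n U0 V -> forall h,
  legal_hist T le greedy U0 h -> length h <= n ->
  survives (n - length h) (greedy_position h) V.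
Proof.
  intros H0; induction h as [|m h IH]; simpl; intros Hh Hlen.
  - rewrite Nat.sub_0_r; exact H0.
  - destruct Hh as [Hh Hm]; rewrite run_greedy in Hm.
    assert (Hsurv := IH Hh ltac:(lia)).
    replace (n - length h) with (S (n - S (length h))) in Hsurv by lia.
    exact (pick_boolP _ (Hsurv m Hm)).
Qed.

Lemma greedy_is_n_strategy : survives n U0 V -> is_n_strategy T le n U0 V greedy.
Proof.
  intros H0 h Hh Hlen; rewrite run_greedy.
  exact (survives_disjoint _ _ _ (greedy_survives H0 h Hh Hlen)).
Qed.

End Strategy.

Lemma survives_of_n_strategy n U0 V sigma : is_n_strategy T le n U0 V sigma ->
  forall k h, legal_hist T le sigma U0 h -> length h + k <= n ->
  survives k (run T le sigma U0 h) V.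
Proof.
  intros Hsigma k; induction k as [|k IH]; simpl; intros h Hh Hlen.
  - apply (Hsigma h Hh); lia.
  - intros m Hm; exists (sigma h m).
    apply (IH (m :: h)); simpl; [split; assumption | lia].
Qed.

Lemma survives_iff_has_n_strategy n U0 V :
  survives n U0 V <-> has_n_strategy T le n U0 V.
Proof.
  split.
  - intro H0; exists (greedy n U0 V); exact (greedy_is_n_strategy n U0 V H0).
  - intros [sigma Hsigma]; exact (survives_of_n_strategy _ _ _ _ Hsigma n [] I ltac:(simpl; lia)).
Qed.

End Reflexive.

Section Antisymmetric.

Hypothesis le_antisym : forall x y, le x y -> le y x -> x = y.

Lemma meet_unique a b c c' : M T le a b c -> M T le a b c' -> c = c'.
Proof. intros (Hca & Hcb & Hc) (Hc'a & Hc'b & Hc'); apply le_antisym; auto. Qed.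

Lemma step_Meet U a b c ch x :
  M T le a b c -> step T le U (Meet a b) ch x <-> add U c x.
Proof.
  intro Hc; simpl; unfold add; split; intros [Hx | Hx]; auto.
  - right; exact (meet_unique _ _ _ _ Hx Hc).
  - right; subst x; exact Hc.
Qed.

Lemma survives_S n U V : survives (S n) U V <->
  forall a b c,
    ((exists d, U d /\ le d a) -> survives n (add U a) V)
    /\ ((U a /\ U b /\ M T le a b c) -> survives n (add U c) V)
    /\ ((U c /\ J T le a b c) -> survives n (add U a) V \/ survives n (add U b) V).
Proof.
  simpl; split.
  - intros H a b c; repeat split.
    + intro Ha; destruct (H (Up a) Ha) as [ch Hch]; exact Hch.
    + intros (Ha & Hb & Hc).
      destruct (H (Meet a b) (conj Ha (conj Hb (ex_intro _ c Hc)))) as [ch Hch].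
      exact (survives_ext _ _ _ _ (fun x => step_Meet U a b c ch x Hc) Hch).
    + intros (Hc & Habc).
      destruct (H (Join a b) (ex_intro _ c (conj Habc Hc))) as [[|] Hch]; auto.
  - intros H [b | a b | a b] Hm; simpl in Hm.
    + exists true; exact (proj1 (H b b b) Hm).
    + destruct Hm as (Ha & Hb & c & Hc); exists true.
      apply (survives_ext _ (add U c)); [intro x; symmetry; apply step_Meet, Hc|].
      exact (proj1 (proj2 (H a b c)) (conj Ha (conj Hb Hc))).
    + destruct Hm as (c & Habc & Hc).
      destruct (proj2 (proj2 (H a b c)) (conj Hc Habc)); [exists true | exists false]; auto.
Qed.

Lemma Ck_snoc xs a z : Ck T (xs ++ [a]) z <-> add (Ck T xs) a z.
Proof. unfold add; induction xs; simpl; tauto. Qed.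

Lemma phi_iff_survives n : forall xs U y, (forall z, Ck T xs z <-> U z) ->
  (phi T le n xs y <-> survives n U (fun x => x = y)).
Proof.
  induction n as [|n IH]; intros xs U y HU.
  - simpl; unfold Dk; split.
    + intros H x Hx ->; apply H, HU, Hx.
    + intros H Hy; exact (H y (proj1 (HU y) Hy) eq_refl).
  - assert (IHa : forall a, phi T le n (xs ++ [a]) y <-> survives n (add U a) (fun x => x = y)).
    { intro a; apply IH; intro z; rewrite Ck_snoc; unfold add; rewrite HU; reflexivity. }
    rewrite survives_S; simpl.
    setoid_rewrite HU; setoid_rewrite IHa; reflexivity.
Qed.

End Antisymmetric.

End Game.

Theorem proposition4p2 (T : Type) (le : T -> T -> Prop)
  (le_refl : forall x, le x x)
  (le_antisym : forall x y, le x y -> le y x -> x = y)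
  (le_trans : forall x y z, le x y -> le y z -> le x z)
  (n : nat) :
  psi T le n <->
  (forall p q : T, ~ le p q ->
     has_n_strategy T le n (fun x => x = p) (fun x => x = q)).
Proof.
  assert (Hsingleton : forall p z, Ck T [p] z <-> z = p) by (simpl; tauto).
  unfold psi; split.
  - intros Hpsi p q Hpq.
    apply survives_iff_has_n_strategy; [exact le_refl|].
    apply (phi_iff_survives T le le_antisym n [p]); [apply Hsingleton | exact (Hpsi p q Hpq)].
  - intros Hstrat p q Hpq.
    apply (phi_iff_survives T le le_antisym n [p] (fun x => x = p)); [apply Hsingleton|].
    apply survives_iff_has_n_strategy; [exact le_refl | exact (Hstrat p q Hpq)].
Qed.
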